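(* Let $G$ be a connected graph with $|V(G)|\geq 3$. The following are equivalent: (a) $G$ is a complete graph; (b) $\chi(\mathcal{R}(G))=2$; (c) $\mathcal{R}(G)$ contains no cycle of length $5$.
   Context: For a connected graph $G$, a search tree on $G$ is a rooted tree with vertex set $V(G)$ defined recursively: its root is some vertex $r\in V(G)$, and the children of $r$ are the roots of search trees on the connected components of $G-r$. For a rooted tree $T$ and $w\in V(T)$, $T|w$ denotes the subtree rooted at $w$. Let $T$ be a search tree on $G$, let $v$ be a child of $u$ in $T$, and let $p$ be the parent of $u$ (if it exists). The $uv$-rotation transforms $T$ into the search tree $T'$ in which: $u$ is a child of $v$ and $v$ is a child of $p$ (or $v$ is the root if $u$ was the root); every subtree of $u$ in $T$ other than $T|v$ is a subtree of $u$ in $T'$; and every subtree $S$ of $v$ in $T$ is a subtree of $u$ in $T'$ if $u$ is adjacent in $G$ to some vertex of $S$, and a subtree of $v$ in $T'$ otherwise. The rotation graph $\mathcal{R}(G)$ is the graph whose vertices are the search trees on $G$, two being adjacent iff they differ by one rotation. $\chi$ denotes chromatic number. *)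

From mathcomp Require Import all_boot.
Set Implicit Arguments. Unset Strict Implicit. Unset Printing Implicit Defensive.

(* A simple graph: vertex type T (finite), adjacency e : rel T, assumed
   symmetric and irreflexive in the theorem. *)

Section SearchTrees.
Variables (T : finType) (e : rel T).

Definition induced (S : {set T}) : rel T :=
  fun a b => [&& a \in S, b \in S & e a b].

Definition comp (S : {set T}) (x : T) : {set T} :=
  [set y | connect (induced S) x y].

(* A rooted tree on V(G) is encoded by its parent function
   par : T -> option T (None exactly at the root).
   [stree par S r] : the restriction of par to S is a search tree on G[S]
   rooted at r, following the recursive definition: r \in S and the children
   of r are the roots of search trees on the components of G[S] - r. *)
Inductive stree (par : T -> option T) : {set T} -> T -> Prop :=
| STree (S : {set T}) (r : T) :
    r \in S ->
    (forall x : T, x \in S :\ r ->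
       exists2 c, c \in comp (S :\ r) x &
         par c = Some r /\ stree par (comp (S :\ r) x) c) ->
    stree par S r.

Definition search_tree (par : {ffun T -> option T}) : Prop :=
  exists2 r, par r = None & stree par [set: T] r.

(* vertex set of the subtree T|w: vertices having w as ancestor-or-self *)
Definition pfun (par : {ffun T -> option T}) (x : T) : T := odflt x (par x).
Definition subtree (par : {ffun T -> option T}) (w : T) : {set T} :=
  [set x | fconnect (pfun par) x w].

Definition rotate (par : {ffun T -> option T}) (u v : T) : {ffun T -> option T} :=
  [ffun x =>
     if x == v then par u
     else if x == u then Some v
     else if par x == Some v then
       (if [exists y in subtree par x, e u y] then Some u else Some v)
     else par x].

Definition rot_adj (p q : {ffun T -> option T}) : Prop :=
  search_tree p /\ search_tree q /\
  ((exists u v, p v = Some u /\ q = rotate p u v) \/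
   (exists u v, q v = Some u /\ p = rotate q u v)).

Definition rot_colorable (k : nat) : Prop :=
  exists c : {ffun T -> option T} -> nat,
    (forall p, search_tree p -> c p < k) /\
    (forall p q, rot_adj p q -> c p <> c q).

Definition rot_chromatic_number (k : nat) : Prop :=
  rot_colorable k /\ forall j, rot_colorable j -> k <= j.

Definition rot_has_C5 : Prop :=
  exists p0 p1 p2 p3 p4 : {ffun T -> option T},
    uniq [:: p0; p1; p2; p3; p4] /\
    rot_adj p0 p1 /\ rot_adj p1 p2 /\ rot_adj p2 p3 /\
    rot_adj p3 p4 /\ rot_adj p4 p0.

End SearchTrees.

Definition complete_graph (T : finType) (e : rel T) : Prop :=
  forall x y : T, x != y -> e x y.

From Pilot Require Import Defs.
From mathcomp Require Import all_boot all_fingroup.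
Set Implicit Arguments. Unset Strict Implicit. Unset Printing Implicit Defensive.

(* Every injective ranking of the vertices yields a search tree, its
   elimination tree: delete the vertices in increasing rank, each one becoming
   the root of the tree built on its component at the time of its deletion.

   If G is not complete, it has an induced path a - b - c.  Ranking all other
   vertices first, in a fixed order, and then a, b, c in the orders abc, bac,
   cba, cab, acb gives five elimination trees that agree off {a, b, c}, hang
   {a, b, c} from the same vertex, and arrange it as the five search trees of
   the path a - b - c, each a rotation of the next (cyclically).  So R(G)
   contains a C5 and is not 2-colourable.

   If G is complete, every search tree is a path, i.e. a linear order of V(G),
   and a rotation swaps two consecutive vertices of it.  Hence the parity of
   this order, viewed as a permutation, properly 2-colours R(G), which has
   edges as soon as |V(G)| >= 2. *)

Section Components.
Variables (T : finType) (e : rel T).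
Implicit Types (S A : {set T}) (x y : T).

Lemma compE S x y : (y \in Defs.comp e S x) = connect (induced e S) x y.
Proof. by rewrite inE. Qed.

Lemma comp_refl S x : x \in Defs.comp e S x.
Proof. by rewrite compE connect0. Qed.

Lemma connect_induced_mem S x y :
  connect (induced e S) x y -> x = y \/ (x \in S /\ y \in S).
Proof.
move=> xy; have clS : closed (induced e S) (mem S) by move=> a b /and3P [-> -> _].
case/connectP: (xy) => [[|z p]] /=; first by move=> _ ->; left.
case/andP => /and3P [xS _ _] _ _; right; split => //.
by rewrite -(closed_connect clS xy).
Qed.

Lemma comp_sub S x : x \in S -> Defs.comp e S x \subset S.
Proof.
by move=> xS; apply/subsetP => y; rewrite compE => /connect_induced_mem [<- | []].
Qed.

Lemma connect_inducedS S (S' : {set T}) x y : S \subset S' ->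
  connect (induced e S) x y -> connect (induced e S') x y.
Proof.
move=> sSS'; apply: connect_sub => a b /and3P [aS bS eab]; apply: connect1.
by rewrite /induced (subsetP sSS' _ aS) (subsetP sSS' _ bS) eab.
Qed.

Lemma connect_inducedI S A x y : x \in A ->
  (forall a b, a \in A -> induced e S a b -> b \in A) ->
  connect (induced e S) x y -> connect (induced e (S :&: A)) x y.
Proof.
move=> xA clA /connectP [p + ->]; elim: p x xA => [|z p IHp] x xA /=.
  by move=> _; exact: connect0.
case/andP => exz pz; have zA := clA _ _ xA exz.
apply: connect_trans (IHp _ zA pz); apply: connect1.
by move: exz => /and3P [xS zS exz]; rewrite /induced !inE xS zS xA zA exz.
Qed.

Lemma connect_isolated S x y : (forall z, ~~ induced e S x z) ->
  connect (induced e S) x y -> y = x.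
Proof.
move=> isox /connectP [[|z p]] /=; first by move=> _ ->.
by case/andP => exz; move: (isox z); rewrite exz.
Qed.

Hypothesis e_sym : symmetric e.

Lemma induced_sym S : symmetric (induced e S).
Proof. by move=> a b; rewrite /induced e_sym andbCA. Qed.

Lemma connect_induced_sym S x y :
  connect (induced e S) x y = connect (induced e S) y x.
Proof. exact: (sym_connect_sym (induced_sym S)). Qed.

End Components.

Section Subtrees.
Variables (T : finType) (p : {ffun T -> option T}).

Lemma subtree_refl w : w \in subtree p w.
Proof. by rewrite inE connect0. Qed.

Lemma subtree_leaf w y : (forall z, p z != Some w) -> y \in subtree p w -> y = w.
Proof.
move=> leaf_w; rewrite inE => /iter_findex; move: (findex _ _ _) => n.
elim: n y => [|n IHn] y //= iterSw; apply: IHn; move: iterSw; rewrite /pfun.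
case pn: (p (iter n _ y)) => [z|] //= zw.
by move: (leaf_w (iter n (pfun p) y)); rewrite /pfun pn zw eqxx.
Qed.

End Subtrees.

Section EliminationTree.
Variables (T : finType) (e : rel T) (rk : T -> nat).
Implicit Types (W : {set T}) (x y z : T).

Definition upper x := [set z | rk x <= rk z].
Definition elim_comp x := Defs.comp e (upper x) x.
Definition elim_cand x := [set y | (rk y < rk x) && (x \in elim_comp y)].

(* Deleting the vertices in increasing order of [rk], the parent of [x] is
   the last deleted vertex whose component at the time of its deletion
   contains [x]. *)
Definition elim_tree : {ffun T -> option T} :=
  [ffun x => if [pick y in elim_cand x] is Some y0
             then Some [arg max_(y > y0 in elim_cand x) rk y] else None].

Lemma elim_comp_edge x y : rk x <= rk y -> e x y -> y \in elim_comp x.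
Proof.
by move=> xy exy; rewrite compE; apply: connect1; rewrite /induced !inE leqnn xy.
Qed.

Lemma elim_comp_path2 x m y : rk x <= rk m -> rk x <= rk y -> e x m -> e m y ->
  y \in elim_comp x.
Proof.
move=> xm xy exm emy; rewrite compE; apply: (@connect_trans _ _ m).
  by apply: connect1; rewrite /induced !inE leqnn xm exm.
by apply: connect1; rewrite /induced !inE xm xy emy.
Qed.

Hypothesis rk_inj : injective rk.

Lemma elim_treeP x y : elim_tree x = Some y <->
  y \in elim_cand x /\ forall z, z \in elim_cand x -> rk z <= rk y.
Proof.
rewrite ffunE; case: pickP => [y0 y0x | nocand]; last first.
  by split=> // -[yx _]; move: (nocand y); rewrite yx.
case: arg_maxnP => // m mx mmax; split => [[<-] | [yx ymax]]; first by split.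
by congr Some; apply: rk_inj; apply/eqP; rewrite eqn_leq ymax //; exact: mmax.
Qed.

Lemma elim_tree_None x : elim_tree x = None <-> elim_cand x = set0.
Proof.
rewrite ffunE; case: pickP => [y0 y0x | nocand].
  by split=> // /setP /(_ y0); rewrite y0x inE.
by split=> // _; apply/setP => y; rewrite in_set0; exact: nocand y.
Qed.

Lemma elim_tree_lt x y : elim_tree x = Some y -> rk y < rk x.
Proof. by case/elim_treeP; rewrite inE => /andP []. Qed.

Lemma elim_comp_upper x : elim_comp x \subset upper x.
Proof. by apply: comp_sub; rewrite inE. Qed.

Lemma upperD1 x : upper x :\ x = [set z | rk x < rk z].
Proof.
apply/setP => z; rewrite !inE ltn_neqAle (inj_eq rk_inj).
by case: eqVneq => [->|]; rewrite ?eqxx.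
Qed.

Lemma upper_subD1 r x : rk r < rk x -> upper x \subset upper r :\ r.
Proof.
by rewrite upperD1 => rx; apply/subsetP => z; rewrite !inE; exact: leq_trans rx.
Qed.

Hypothesis e_sym : symmetric e.

Lemma comp_elim_compD1 r x : x \in elim_comp r :\ r ->
  Defs.comp e (elim_comp r :\ r) x = Defs.comp e (upper r :\ r) x.
Proof.
move=> xBr; have xB : x \in elim_comp r by case/setD1P: xBr.
apply/setP => y; rewrite !compE; apply/idP/idP.
  by apply: connect_inducedS; apply: setSD; exact: elim_comp_upper.
move=> /(connect_inducedI xB) /=.
rewrite setIC setIDA (setIidPl (elim_comp_upper r)); apply=> a b.
rewrite !compE => ra /(connect1 (e := induced e (upper r :\ r))).
by move/(connect_inducedS (subsetDl _ _)); exact: connect_trans.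
Qed.

Lemma elim_comp_argmin W x c : upper c \subset W -> c \in Defs.comp e W x ->
  (forall z, z \in Defs.comp e W x -> rk c <= rk z) ->
  elim_comp c = Defs.comp e W x.
Proof.
move=> ucW cC cmin; have xc : connect (induced e W) x c by rewrite -compE.
apply/setP => y; rewrite !compE; apply/idP/idP.
  by move/(connect_inducedS ucW); exact: connect_trans.
move=> xy; have cy : connect (induced e W) c y.
  by apply: connect_trans xy; rewrite connect_induced_sym.
have sub : W :&: Defs.comp e W x \subset upper c.
  by apply/subsetP => z /setIP [_ /cmin]; rewrite inE.
apply: connect_inducedS sub (connect_inducedI cC _ cy) => a b.
by rewrite !compE => xa /connect1; exact: connect_trans.
Qed.

Lemma elim_tree_argmin r x c : x \in elim_comp r :\ r ->
  c \in Defs.comp e (upper r :\ r) x ->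
  (forall z, z \in Defs.comp e (upper r :\ r) x -> rk c <= rk z) ->
  elim_tree c = Some r.
Proof.
move=> xBr cC cmin; have xW := subsetP (setSD _ (elim_comp_upper r)) x xBr.
have rc : rk r < rk c by move: (subsetP (comp_sub e xW) c cC); rewrite upperD1 inE.
apply/elim_treeP; split.
  rewrite inE rc /=.
  by move: cC; rewrite -comp_elim_compD1 // => /(subsetP (comp_sub e xBr)) /setD1P [].
move=> z; rewrite inE => /andP [zc czB]; rewrite leqNgt; apply/negP => rz.
have uzW := upper_subD1 rz.
have : z \in Defs.comp e (upper r :\ r) x.
  move: cC czB; rewrite !compE => xc /(connect_inducedS uzW) zc'.
  by apply: connect_trans xc _; rewrite connect_induced_sym.
by move/cmin; rewrite leqNgt zc.
Qed.

Lemma stree_elim_comp r : stree e elim_tree (elim_comp r) r.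
Proof.
have [n] := ubnP #|upper r|; elim: n r => // n IHn r ltUn.
constructor=> [|x xBr]; first exact: comp_refl.
have xW := subsetP (setSD _ (elim_comp_upper r)) x xBr.
rewrite comp_elim_compD1 //; set C := Defs.comp e (upper r :\ r) x.
have [c cC cmin] := @arg_minnP _ x (fun y => y \in C) rk (comp_refl _ _ _).
have ucW : upper c \subset upper r :\ r.
  by apply: upper_subD1; move: (subsetP (comp_sub e xW) c cC); rewrite upperD1 inE.
exists c => //; split; first exact: elim_tree_argmin xBr cC cmin.
rewrite /C -(elim_comp_argmin ucW cC cmin); apply: IHn.
move: ltUn; rewrite (cardsD1 r (upper r)) inE leqnn add1n ltnS.
exact: leq_ltn_trans (subset_leq_card ucW).
Qed.

Hypothesis e_conn : forall x y, connect e x y.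

Lemma search_tree_elim (x0 : T) : search_tree e elim_tree.
Proof.
have [r _ rmin] := arg_minnP rk (isT : predT x0).
exists r.
  by apply/elim_tree_None/setP => y; rewrite !inE ltnNge rmin.
suff -> : [set: T] = elim_comp r by exact: stree_elim_comp.
rewrite /elim_comp.
have -> : upper r = setT by apply/setP => z; rewrite !inE rmin.
apply/setP => y; rewrite compE inE; symmetry.
by rewrite (@eq_connect _ _ e) ?e_conn // => a b; rewrite /induced !in_setT.
Qed.

End EliminationTree.

Lemma eq_elim_tree (T : finType) (e : rel T) (rk rk' : T -> nat) x x' :
  injective rk -> injective rk' ->
  elim_cand e rk x =i elim_cand e rk' x' -> {in elim_cand e rk x, rk =1 rk'} ->
  elim_tree e rk x = elim_tree e rk' x'.
Proof.
move=> rk_inj rk'_inj eq_cand eq_rk; case px: (elim_tree e rk x) => [y|].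
  case/(elim_treeP e rk_inj): px => yx ymax; symmetry; apply/(elim_treeP e rk'_inj).
  split=> [|z]; rewrite -eq_cand // => zx.
  by rewrite -!eq_rk //; exact: ymax.
move/elim_tree_None: px => nocand; symmetry; apply/elim_tree_None/setP => y.
by rewrite -eq_cand nocand.
Qed.

Lemma rot_adj_elim_tree (T : finType) (e : rel T) (rk rk' : T -> nat) u v :
  symmetric e -> (forall x y, connect e x y) -> injective rk -> injective rk' ->
  elim_tree e rk v = Some u -> rotate e (elim_tree e rk) u v = elim_tree e rk' ->
  rot_adj e (elim_tree e rk) (elim_tree e rk').
Proof.
move=> e_sym e_conn rk_inj rk'_inj vu rot_uv.
split; first exact: search_tree_elim rk_inj e_sym e_conn u.
by split; [exact: search_tree_elim rk'_inj e_sym e_conn u | left; exists u, v].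
Qed.

Section TopSet.
Variables (T : finType) (e : rel T) (X : {set T}).
Implicit Types (R : T -> nat) (x y z : T).

(* [R] agrees with the fixed order [enum_rank] off [X] and ranks all of [X]
   above it, so that [X] is deleted last. *)
Definition top_ranked R :=
  (forall x, x \notin X -> R x = enum_rank x) /\ (forall x, x \in X -> #|T| <= R x).

Lemma top_ranked_lt R x y : top_ranked R -> x \notin X -> y \in X -> R x < R y.
Proof.
by move=> R_top xX yX; rewrite R_top.1 //; exact: leq_trans (ltn_ord _) (R_top.2 y yX).
Qed.

Lemma top_ranked_X_upper R y : top_ranked R -> y \notin X -> X \subset upper R y.
Proof.
by move=> R_top yX; apply/subsetP => z zX; rewrite inE ltnW // top_ranked_lt.
Qed.

Lemma top_ranked_eq_off R R' x : top_ranked R -> top_ranked R' -> x \notin X ->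
  R x = R' x.
Proof. by move=> R_top R'_top xX; rewrite R_top.1 // R'_top.1. Qed.

Lemma upper_off R R' y : top_ranked R -> top_ranked R' -> y \notin X ->
  upper R y = upper R' y.
Proof.
move=> R_top R'_top yX; apply/setP => z; rewrite !inE.
have R_R' := top_ranked_eq_off R_top R'_top.
case: (boolP (z \in X)) => zX; last by rewrite !R_R'.
by rewrite (ltnW (top_ranked_lt R_top yX zX)) (ltnW (top_ranked_lt R'_top yX zX)).
Qed.

Lemma elim_cand_off_notin R x y : top_ranked R -> x \notin X ->
  y \in elim_cand e R x -> y \notin X.
Proof.
move=> R_top xX; rewrite inE => /andP [yx _]; apply: contraL yx => yX.
by rewrite -leqNgt (ltnW (top_ranked_lt R_top xX yX)).
Qed.

Lemma elim_cand_off R R' x : top_ranked R -> top_ranked R' -> x \notin X ->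
  elim_cand e R x =i elim_cand e R' x.
Proof.
move=> R_top R'_top xX y; rewrite !inE.
case: (boolP (y \in X)) => yX; last first.
  by rewrite !(top_ranked_eq_off R_top R'_top) // (upper_off R_top R'_top).
have [xy x'y] := (top_ranked_lt R_top xX yX, top_ranked_lt R'_top xX yX).
by rewrite !ltnNge (ltnW xy) (ltnW x'y).
Qed.

Lemma elim_tree_off R R' x : injective R -> injective R' ->
  top_ranked R -> top_ranked R' -> x \notin X -> elim_tree e R x = elim_tree e R' x.
Proof.
move=> R_inj R'_inj R_top R'_top xX; apply: eq_elim_tree => //.
  exact: elim_cand_off.
by move=> y /(elim_cand_off_notin R_top xX); exact: top_ranked_eq_off.
Qed.

Lemma elim_tree_off_notin R x y : injective R -> top_ranked R -> x \notin X ->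
  elim_tree e R x = Some y -> y \notin X.
Proof.
by move=> R_inj R_top xX /(elim_treeP e R_inj) [yx _]; exact: elim_cand_off_notin yx.
Qed.

Hypothesis X_conn :
  forall S : {set T}, X \subset S -> {in X &, forall z w, connect (induced e S) z w}.

Lemma elim_tree_top R R' t t' : injective R -> injective R' ->
  top_ranked R -> top_ranked R' -> t \in X -> t' \in X ->
  {in X, forall z, R t <= R z} -> {in X, forall z, R' t' <= R' z} ->
  elim_tree e R t = elim_tree e R' t'.
Proof.
move=> R_inj R'_inj R_top R'_top tX t'X tmin t'min.
have eq_cand : elim_cand e R t =i elim_cand e R' t'.
  move=> y; rewrite !inE; case: (boolP (y \in X)) => yX.
    by rewrite !ltnNge tmin // t'min.
  rewrite (top_ranked_lt R_top yX tX) (top_ranked_lt R'_top yX t'X) /=.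
  rewrite (upper_off R_top R'_top yX).
  have XU := top_ranked_X_upper R'_top yX.
  by apply/idP/idP => /connect_trans; apply; exact: X_conn.
apply: eq_elim_tree => // y; rewrite inE => /andP [yt _].
apply: top_ranked_eq_off => //.
by apply: contraL yt => yX; rewrite -leqNgt tmin.
Qed.

Lemma elim_tree_in R x y : injective R -> top_ranked R -> y \in X ->
  R y < R x -> x \in elim_comp e R y ->
  (forall z, z \in X -> R y < R z -> R z < R x -> x \notin elim_comp e R z) ->
  elim_tree e R x = Some y.
Proof.
move=> R_inj R_top yX yx xy between; apply/(elim_treeP e R_inj).
split=> [|z]; first by rewrite inE yx xy.
rewrite inE => /andP [zx xz]; case: (boolP (z \in X)) => zX.
  by rewrite leqNgt; apply: contraL xz => yz; exact: between.
exact: ltnW (top_ranked_lt R_top zX yX).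
Qed.

Lemma rotate_elim_tree R R' u v : injective R -> injective R' ->
  top_ranked R -> top_ranked R' -> v \in X ->
  elim_tree e R' v = elim_tree e R u -> elim_tree e R' u = Some v ->
  (forall w, w \in X -> w != u -> w != v ->
     elim_tree e R' w = if elim_tree e R w == Some v then
       (if [exists y in subtree (elim_tree e R) w, e u y] then Some u else Some v)
       else elim_tree e R w) ->
  rotate e (elim_tree e R) u v = elim_tree e R'.
Proof.
move=> R_inj R'_inj R_top R'_top vX R'v R'u R'w; apply/ffunP => x; rewrite ffunE.
case: eqVneq => [-> //|xv]; case: eqVneq => [-> //|xu].
case: (boolP (x \in X)) => xX; first by rewrite R'w.
case: eqP => [/(elim_tree_off_notin R_inj R_top xX)|_]; first by rewrite vX.
exact: elim_tree_off.
Qed.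

End TopSet.

Section InducedPath.
Variables (T : finType) (e : rel T) (a b c : T).
Hypotheses (e_sym : symmetric e) (e_irr : irreflexive e).
Hypotheses (ab : a != b) (bc : b != c) (ac : a != c) (eab : e a b) (ebc : e b c).

Let X : {set T} := [set a; b; c].

Lemma inX z : z \in X -> [\/ z = a, z = b | z = c].
Proof.
by rewrite !inE => /orP [/orP [] | ] /eqP ->; [constructor 1 | constructor 2 | constructor 3].
Qed.

Lemma aX : a \in X. Proof. by rewrite !inE eqxx. Qed.
Lemma bX : b \in X. Proof. by rewrite !inE eqxx orbT. Qed.
Lemma cX : c \in X. Proof. by rewrite !inE eqxx !orbT. Qed.

Lemma path3_conn (S : {set T}) : X \subset S ->
  {in X &, forall z w, connect (induced e S) z w}.
Proof.
move=> XS; have aS := subsetP XS a aX; have bS := subsetP XS b bX.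
have cS := subsetP XS c cX.
have from_b z : z \in X -> connect (induced e S) b z.
  case/inX=> ->; [apply: connect1 | exact: connect0 | apply: connect1].
  - by rewrite /induced bS aS e_sym.
  - by rewrite /induced bS cS.
move=> z w /from_b bz /from_b; apply: connect_trans.
by rewrite connect_induced_sym.
Qed.

Definition rank3 (ia ib ic : nat) (x : T) : nat :=
  if x == a then #|T| + ia else if x == b then #|T| + ib
  else if x == c then #|T| + ic else enum_rank x.

Lemma rank3a ia ib ic : rank3 ia ib ic a = #|T| + ia.
Proof. by rewrite /rank3 eqxx. Qed.
Lemma rank3b ia ib ic : rank3 ia ib ic b = #|T| + ib.
Proof. by rewrite /rank3 eq_sym (negbTE ab) eqxx. Qed.
Lemma rank3c ia ib ic : rank3 ia ib ic c = #|T| + ic.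
Proof. by rewrite /rank3 eq_sym (negbTE ac) eq_sym (negbTE bc) eqxx. Qed.

Lemma rank3_top ia ib ic : top_ranked X (rank3 ia ib ic).
Proof.
split=> [x | x /inX [] ->]; rewrite ?rank3a ?rank3b ?rank3c ?leq_addr //.
rewrite !inE => /norP [/norP [/negbTE xa /negbTE xb] /negbTE xc].
by rewrite /rank3 xa xb xc.
Qed.

Lemma rank3_inj ia ib ic : uniq [:: ia; ib; ic] -> injective (rank3 ia ib ic).
Proof.
move=> uniq_i x y; have R_top := rank3_top ia ib ic.
case: (boolP (x \in X)) => xX; case: (boolP (y \in X)) => yX.
- case/inX: xX => ->; case/inX: yX => ->; rewrite ?rank3a ?rank3b ?rank3c //;
    by move/addnI => Eij; move: uniq_i; rewrite /= !inE Eij !eqxx ?orbT ?andbF.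
- by move=> Exy; move: (top_ranked_lt R_top yX xX); rewrite Exy ltnn.
- by move=> Exy; move: (top_ranked_lt R_top xX yX); rewrite Exy ltnn.
- by rewrite R_top.1 // R_top.1 // => /ord_inj /enum_rank_inj.
Qed.

Local Ltac ranks := rewrite ?rank3a ?rank3b ?rank3c ?ltn_add2l ?leq_add2l.

(* Found by [done] in the tactics below. *)
Let eba : e b a. Proof. by rewrite e_sym. Qed.
Let ecb : e c b. Proof. by rewrite e_sym. Qed.

Lemma elim_tree3_in ia ib ic x y : uniq [:: ia; ib; ic] -> y \in X ->
  rank3 ia ib ic y < rank3 ia ib ic x -> x \in elim_comp e (rank3 ia ib ic) y ->
  (forall z, z \in X -> rank3 ia ib ic y < rank3 ia ib ic z ->
     rank3 ia ib ic z < rank3 ia ib ic x -> x \notin elim_comp e (rank3 ia ib ic) z) ->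
  elim_tree e (rank3 ia ib ic) x = Some y.
Proof. by move/rank3_inj/elim_tree_in; apply; exact: rank3_top. Qed.

Lemma elim_tree3_top ia ib ic t : uniq [:: ia; ib; ic] -> t \in X ->
  {in X, forall z, rank3 ia ib ic t <= rank3 ia ib ic z} ->
  elim_tree e (rank3 ia ib ic) t = elim_tree e (rank3 0 1 2) a.
Proof.
move=> /rank3_inj R_inj tX tmin.
apply: elim_tree_top (rank3_top _ _ _) (rank3_top _ _ _) tX aX tmin _ => //.
- exact: path3_conn.
- exact: rank3_inj.
- by move=> z /inX [] ->; ranks.
Qed.

(* [rk_xyz] deletes x, then y, then z. *)
Local Notation rk_abc := (rank3 0 1 2).
Local Notation rk_bac := (rank3 1 0 2).
Local Notation rk_cba := (rank3 2 1 0).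
Local Notation rk_cab := (rank3 1 2 0).
Local Notation rk_acb := (rank3 0 2 1).
(* The common parent of [X] in all five trees. *)
Local Notation anchor := (elim_tree e rk_abc a).

Let abc_inj : injective rk_abc := @rank3_inj 0 1 2 isT.
Let bac_inj : injective rk_bac := @rank3_inj 1 0 2 isT.
Let cba_inj : injective rk_cba := @rank3_inj 2 1 0 isT.
Let cab_inj : injective rk_cab := @rank3_inj 1 2 0 isT.
Let acb_inj : injective rk_acb := @rank3_inj 0 2 1 isT.

Local Ltac parent_by_edge yX :=
  apply: (elim_tree3_in _ yX); ranks => //;
  [apply: elim_comp_edge; ranks | move=> z /inX [] ->; ranks].
Local Ltac parent_by_path yX m :=
  apply: (elim_tree3_in _ yX); ranks => //;
  [apply: (@elim_comp_path2 _ _ _ _ m); ranks | move=> z /inX [] ->; ranks].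
Local Ltac first_in_X tX :=
  apply: (elim_tree3_top _ tX) => //; move=> z /inX [] ->; ranks.

Lemma abc_b : elim_tree e rk_abc b = Some a. Proof. by parent_by_edge aX. Qed.
Lemma abc_c : elim_tree e rk_abc c = Some b. Proof. by parent_by_edge bX. Qed.
Lemma bac_b : elim_tree e rk_bac b = anchor. Proof. by first_in_X bX. Qed.
Lemma bac_a : elim_tree e rk_bac a = Some b. Proof. by parent_by_edge bX. Qed.
Lemma cba_c : elim_tree e rk_cba c = anchor. Proof. by first_in_X cX. Qed.
Lemma cba_b : elim_tree e rk_cba b = Some c. Proof. by parent_by_edge cX. Qed.
Lemma cba_a : elim_tree e rk_cba a = Some b. Proof. by parent_by_edge bX. Qed.
Lemma cab_c : elim_tree e rk_cab c = anchor. Proof. by first_in_X cX. Qed.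
Lemma cab_a : elim_tree e rk_cab a = Some c. Proof. by parent_by_path cX b. Qed.
Lemma cab_b : elim_tree e rk_cab b = Some a. Proof. by parent_by_edge aX. Qed.
Lemma acb_a : elim_tree e rk_acb a = anchor. Proof. by first_in_X aX. Qed.
Lemma acb_c : elim_tree e rk_acb c = Some a. Proof. by parent_by_path aX b. Qed.
Lemma acb_b : elim_tree e rk_acb b = Some c. Proof. by parent_by_edge cX. Qed.

Lemma bac_c_adj : e a c -> elim_tree e rk_bac c = Some a.
Proof. by move=> eac; parent_by_edge aX. Qed.

Lemma bac_c_nonadj : ~~ e a c -> elim_tree e rk_bac c = Some b.
Proof.
move=> nac; apply: (elim_tree3_in _ bX); ranks => //.
  by apply: elim_comp_edge; ranks.
move=> z /inX [] ->; ranks => // _ _; rewrite compE.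
apply: contra_neqN ac => /connect_isolated -> // y; rewrite /induced !inE.
case: (boolP (y \in X)) => [/inX [] -> | yX]; last first.
  by rewrite leqnn leqNgt (top_ranked_lt (rank3_top _ _ _) yX aX).
all: by ranks; rewrite ?e_irr ?(negbTE nac) ?andbF.
Qed.

Lemma anchor_notin_X y : y \in X -> anchor != Some y.
Proof.
move=> yX; apply/eqP => /(elim_tree_lt abc_inj).
by rewrite rank3a addn0 ltnNge (rank3_top _ _ _).2.
Qed.

Lemma abc_c_leaf z : elim_tree e rk_abc z != Some c.
Proof.
apply/eqP => /(elim_tree_lt abc_inj); apply/negP; rewrite -leqNgt.
case: (boolP (z \in X)) => [/inX [] -> | zX]; last first.
  exact: ltnW (top_ranked_lt (rank3_top _ _ _) zX cX).
all: by ranks.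
Qed.

Lemma path3_trees_uniq : uniq [:: elim_tree e rk_abc; elim_tree e rk_bac;
  elim_tree e rk_cba; elim_tree e rk_cab; elim_tree e rk_acb].
Proof.
apply: (@map_uniq _ _ (fun p : {ffun T -> option T} => (p a, p b))) => /=.
rewrite abc_b bac_a bac_b cba_a cba_b cab_a cab_b acb_a acb_b.
rewrite !inE !xpair_eqE !(inj_eq Some_inj) (negbTE ac) (negbTE bc).
rewrite ![Some _ == anchor]eq_sym.
by rewrite (negbTE (anchor_notin_X bX)) (negbTE (anchor_notin_X cX)) ?andbF.
Qed.

Hypothesis e_conn : forall x y : T, connect e x y.

Lemma rot_abc_bac : rot_adj e (elim_tree e rk_abc) (elim_tree e rk_bac).
Proof.
apply: rot_adj_elim_tree abc_inj bac_inj abc_b _ => //.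
apply: rotate_elim_tree (rank3_top _ _ _) (rank3_top _ _ _) bX bac_b bac_a _ => //.
move=> w /inX [] -> //; rewrite ?eqxx // => _ _; rewrite abc_c eqxx.
have -> : [exists y in subtree (elim_tree e rk_abc) c, e a y] = e a c.
  apply/existsP/idP => [[y /andP [yc]] | eac]; last by exists c; rewrite subtree_refl.
  by rewrite (subtree_leaf abc_c_leaf yc).
by case: ifPn => [/bac_c_adj | /bac_c_nonadj].
Qed.

Lemma rot_bac_cba : ~~ e a c -> rot_adj e (elim_tree e rk_bac) (elim_tree e rk_cba).
Proof.
move=> nac; apply: rot_adj_elim_tree bac_inj cba_inj (bac_c_nonadj nac) _ => //.
apply: rotate_elim_tree (rank3_top _ _ _) (rank3_top _ _ _) cX _ cba_b _ => //.
  by rewrite cba_c bac_b.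
move=> w /inX [] -> //; rewrite ?eqxx // => _ _.
by rewrite bac_a cba_a (inj_eq Some_inj) (negbTE bc).
Qed.

Lemma rot_cba_cab : rot_adj e (elim_tree e rk_cba) (elim_tree e rk_cab).
Proof.
apply: rot_adj_elim_tree cba_inj cab_inj cba_a _ => //.
apply: rotate_elim_tree (rank3_top _ _ _) (rank3_top _ _ _) aX _ cab_b _ => //.
  by rewrite cab_a cba_b.
move=> w /inX [] -> //; rewrite ?eqxx // => _ _.
by rewrite cba_c cab_c (negbTE (anchor_notin_X aX)).
Qed.

Lemma rot_cab_acb : rot_adj e (elim_tree e rk_cab) (elim_tree e rk_acb).
Proof.
apply: rot_adj_elim_tree cab_inj acb_inj cab_a _ => //.
apply: rotate_elim_tree (rank3_top _ _ _) (rank3_top _ _ _) aX _ acb_c _ => //.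
  by rewrite acb_a cab_c.
move=> w /inX [] -> //; rewrite ?eqxx // => _ _.
rewrite cab_b eqxx acb_b; case: existsP => // -[]; exists b.
by rewrite subtree_refl ecb.
Qed.

Lemma rot_acb_abc : rot_adj e (elim_tree e rk_acb) (elim_tree e rk_abc).
Proof.
apply: rot_adj_elim_tree acb_inj abc_inj acb_b _ => //.
apply: rotate_elim_tree (rank3_top _ _ _) (rank3_top _ _ _) bX _ abc_c _ => //.
  by rewrite abc_b acb_c.
move=> w /inX [] -> //; rewrite ?eqxx // => _ _.
by rewrite acb_a (negbTE (anchor_notin_X bX)).
Qed.

Lemma path3_rot_C5 : ~~ e a c -> rot_has_C5 e.
Proof.
move=> nac; exists (elim_tree e rk_abc), (elim_tree e rk_bac), (elim_tree e rk_cba),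
  (elim_tree e rk_cab), (elim_tree e rk_acb).
split; first exact: path3_trees_uniq.
by split; [exact: rot_abc_bac | split; [exact: rot_bac_cba | split; [exact: rot_cba_cab
  | split; [exact: rot_cab_acb | exact: rot_acb_abc]]]].
Qed.

Lemma path3_rot_adj : exists p q, rot_adj e p q.
Proof. by exists (elim_tree e rk_abc), (elim_tree e rk_bac); exact: rot_abc_bac. Qed.
End InducedPath.

Section SearchTrees.
Variables (T : finType) (e : rel T) (p : {ffun T -> option T}).
Implicit Types (S : {set T}) (x y z r : T).

Lemma stree_ind_strong (P : {set T} -> T -> Prop) :
  (forall S r, r \in S ->
     (forall x, x \in S :\ r -> exists2 c, c \in Defs.comp e (S :\ r) x &
        [/\ p c = Some r, stree e p (Defs.comp e (S :\ r) x) c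
          & P (Defs.comp e (S :\ r) x) c]) ->
     P S r) ->
  forall S r, stree e p S r -> P S r.
Proof.
move=> IHstree S r; have [n] := ubnP #|S|; elim: n S r => // n IHn S r ltSn.
move=> stree_Sr; case: stree_Sr ltSn => {}S {}r rS children ltSn.
apply: IHstree => // x xSr.
have [c cC [pc stree_c]] := children x xSr; exists c => //; split=> //.
apply: IHn stree_c; rewrite ltnS in ltSn; apply: leq_trans ltSn.
rewrite (cardsD1 r S) rS add1n ltnS.
exact/subset_leq_card/comp_sub.
Qed.

Lemma stree_reach S r : stree e p S r ->
  {in S, forall x, exists n, iter n (pfun p) x = r}.
Proof.
elim/stree_ind_strong => {}S {}r _ children x xS.
case: (eqVneq x r) => [->|xr]; first by exists 0.
have xSr : x \in S :\ r by rewrite in_setD1 xr.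
have [c _ [pc _ /(_ x (comp_refl _ _ _)) [k xc]]] := children x xSr.
by exists k.+1; rewrite iterS xc /pfun pc.
Qed.

Lemma stree_parent S r : stree e p S r ->
  {in S, forall x, x != r -> exists2 z, z \in S & p x = Some z}.
Proof.
elim/stree_ind_strong => {}S {}r rS children x xS xr.
have xSr : x \in S :\ r by rewrite in_setD1 xr.
have [c cC [pc _ IHc]] := children x xSr.
case: (eqVneq x c) => [->|xc]; first by exists r.
have [z zC pz] := IHc x (comp_refl _ _ _) xc.
by exists z => //; move/(subsetP (comp_sub e xSr))/setD1P: zC => [].
Qed.

Lemma search_tree_root_uniq r x :
  search_tree e p -> p r = None -> p x = None -> x = r.
Proof.
case=> r0 pr0 stree0 pr px.
suff root y : p y = None -> y = r0 by rewrite (root x px) (root r pr).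
move=> py; case: (eqVneq y r0) => // yr0.
by have [z _] := stree_parent stree0 (in_setT y) yr0; rewrite py.
Qed.

End SearchTrees.

Section Depth.
Variable T : finType.
Implicit Types (p : {ffun T -> option T}) (x y : T).

Definition reaches_root p := forall x, exists n, p (iter n (pfun p) x) = None.

Definition depth p x := find (fun y => p y == None) (fingraph.orbit (pfun p) x).

Lemma search_tree_reaches_root (e : rel T) p : search_tree e p -> reaches_root p.
Proof.
case=> r pr stree_r x; have [n xr] := stree_reach stree_r (in_setT x).
by exists n; rewrite xr.
Qed.

Lemma depth_lt_order p x : reaches_root p -> depth p x < fingraph.order (pfun p) x.
Proof.
move=> /(_ x) [n pn]; rewrite -size_orbit -has_find; apply/hasP.
by exists (iter n (pfun p) x); rewrite -?fconnect_orbit ?fconnect_iter ?pn.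
Qed.

Lemma depthP p x : reaches_root p ->
  p (iter (depth p x) (pfun p) x) = None /\
  forall m, p (iter m (pfun p) x) = None -> depth p x <= m.
Proof.
move=> p_root; have lt_order := depth_lt_order x p_root.
split.
  apply/eqP; rewrite -(nth_traject _ lt_order x).
  by apply: (nth_find x (a := fun y => p y == None)); rewrite has_find size_orbit.
move=> m pm; rewrite leqNgt; apply/negP => lt_m.
have := before_find x lt_m; rewrite nth_traject ?pm ?eqxx //.
exact: ltn_trans lt_m lt_order.
Qed.

Lemma depth_lt p x : reaches_root p -> depth p x < #|T|.
Proof. by move=> p_root; apply: leq_trans (depth_lt_order x p_root) (max_card _). Qed.

Lemma depth0 p x : reaches_root p -> p x = None -> depth p x = 0.
Proof. by move=> p_root px; apply/eqP; rewrite -leqn0; apply: (depthP x p_root).2. Qed.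

Lemma depthS p x y : reaches_root p -> p x = Some y -> depth p x = (depth p y).+1.
Proof.
move=> p_root pxy; have iterSx k : iter k.+1 (pfun p) x = iter k (pfun p) y.
  by rewrite iterSr /pfun pxy.
have [px px_min] := depthP x p_root; have [py py_min] := depthP y p_root.
move: px px_min; case: (depth p x) => [|d] px px_min; first by rewrite /= pxy in px.
congr _.+1; apply/eqP; rewrite eqn_leq py_min -?iterSx //.
by rewrite -ltnS px_min // iterSx.
Qed.

Lemma depth_unique p (h : T -> nat) : reaches_root p ->
  (forall x, p x = None -> h x = 0) ->
  (forall x y, p x = Some y -> h x = (h y).+1) ->
  h =1 depth p.
Proof.
move=> p_root h0 hS x; have [k dx] : exists k, depth p x = k by exists (depth p x).
rewrite dx; elim: k x dx => [|k IHk] x dx.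
  by apply: h0; have [] := depthP x p_root; rewrite dx.
case px: (p x) => [y|]; last by rewrite (depth0 p_root px) in dx.
by rewrite (hS _ _ px) (IHk y) //; move: dx; rewrite (depthS p_root px) => -[].
Qed.

Lemma parent_neq p u v : reaches_root p -> p v = Some u -> u != v.
Proof.
by move=> p_root pv; apply/eqP => uv; move: (depthS p_root pv); rewrite uv => /n_Sn.
Qed.

End Depth.

Section CompleteGraph.
Variables (T : finType) (e : rel T).
Hypothesis e_complete : complete_graph e.
Implicit Types (p q : {ffun T -> option T}) (S : {set T}) (x y z r : T).

Lemma comp_complete S x : x \in S -> Defs.comp e S x = S.
Proof.
move=> xS; apply/eqP; rewrite eqEsubset comp_sub //=; apply/subsetP => y yS.
rewrite compE; case: (eqVneq x y) => [->|xy]; first exact: connect0.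
by apply: connect1; rewrite /induced xS yS e_complete.
Qed.

Lemma stree_complete_child_uniq p S r : stree e p S r ->
  {in S &, forall x y, x != r -> y != r -> p x = p y -> x = y}.
Proof.
elim/stree_ind_strong => {}S {}r _ children x y xS yS xr yr pxy.
have xSr : x \in S :\ r by rewrite in_setD1 xr.
have ySr : y \in S :\ r by rewrite in_setD1 yr.
have [c] := children x xSr; rewrite comp_complete // => _ [pc stree_c IHc].
have not_child z : z \in S :\ r -> z != c -> p z != Some r.
  move=> zSr zc; apply/eqP => pz; have [w wSr] := stree_parent stree_c zSr zc.
  by rewrite pz => -[rw]; rewrite -rw setD11 in wSr.
case: (eqVneq x c) => [xc|xc]; case: (eqVneq y c) => [yc|yc]; first by rewrite xc yc.
- by case/negP: (not_child y ySr yc); rewrite -pxy xc pc.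
- by case/negP: (not_child x xSr xc); rewrite pxy yc pc.
- exact: IHc.
Qed.

Lemma depth_complete_inj p : search_tree e p -> injective (depth p).
Proof.
move=> p_st; have p_root := search_tree_reaches_root p_st.
case: (p_st) => r pr stree_r.
have not_root z y : p z = Some y -> z != r.
  by move=> pz; apply: contra_eqN pz => /eqP ->; rewrite pr.
move=> x y dxy; have [k dx] : exists k, depth p x = k by exists (depth p x).
elim: k x y dxy dx => [|k IHk] x y dxy dx.
  have [px _] := depthP x p_root; have [py _] := depthP y p_root.
  rewrite dx /= in px; rewrite -dxy dx /= in py.
  by rewrite (search_tree_root_uniq p_st px py).
case px: (p x) => [x'|]; last by rewrite (depth0 p_root px) in dx.
case py: (p y) => [y'|]; last by rewrite dxy (depth0 p_root py) in dx.
have dx' : depth p x' = k by move: dx; rewrite (depthS p_root px) => -[].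
have dy' : depth p y' = k by move: dx; rewrite dxy (depthS p_root py) => -[].
have x'y' : x' = y' by apply: IHk; rewrite ?dx' ?dy'.
apply: (stree_complete_child_uniq stree_r) (not_root _ _ px) (not_root _ _ py) _.
- exact: in_setT.
- exact: in_setT.
- by rewrite px py x'y'.
Qed.

Lemma depth_rotate p u v : search_tree e p -> search_tree e (rotate e p u v) ->
  p v = Some u -> depth (rotate e p u v) =1 depth p \o tperm u v.
Proof.
move=> p_st q_st pv; have p_root := search_tree_reaches_root p_st.
have [r pr stree_r] := p_st.
have dv : depth p v = (depth p u).+1 by exact: depthS p_root pv.
have uv := parent_neq p_root pv.
have tpermO z : z != u -> z != v -> tperm u v z = z.
  by move=> zu zv; apply: tpermD; rewrite eq_sym.
move=> x; symmetry; apply: depth_unique (search_tree_reaches_root q_st) _ _ x => z.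
  rewrite ffunE /=; case: eqVneq => [-> pu | zv].
    by rewrite tpermR (depth0 p_root pu).
  case: eqVneq => [// | zu]; case: eqP => [_ | _ pz]; first by case: ifP.
  by rewrite tpermO // (depth0 p_root pz).
move=> y; rewrite ffunE /=; case: eqVneq => [-> pu | zv].
  rewrite tpermR (depthS p_root pu) tpermO //; first exact: parent_neq p_root pu.
  apply/eqP => yv; move: (depthS p_root pu); rewrite yv dv.
  by move/eqP; rewrite ltn_eqF // leqnSn.
case: eqVneq => [-> [<-] | zu]; first by rewrite tpermL tpermR dv.
case: eqP => [pz | pz pzy].
  have -> : [exists y0 in subtree p z, e u y0].
    by apply/existsP; exists z; rewrite subtree_refl e_complete // eq_sym.
  by move=> [<-]; rewrite tpermL tpermO // (depthS p_root pz) dv.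
rewrite tpermO // (depthS p_root pzy) tpermO //.
  apply/eqP => yu; move/eqP: zv; apply.
  apply: (stree_complete_child_uniq stree_r (in_setT z) (in_setT v)).
  - by apply: contra_eq_neq pzy => ->; rewrite pr.
  - by apply: contra_eq_neq pv => ->; rewrite pr.
  - by rewrite pzy pv yu.
by apply/eqP => yv; apply: pz; rewrite pzy yv.
Qed.

Definition depth_enum p x := nth x (enum T) (depth p x).

Lemma depth_enum_inj p : search_tree e p -> injective (depth_enum p).
Proof.
move=> p_st x y; have p_root := search_tree_reaches_root p_st.
have := depth_lt x p_root; have := depth_lt y p_root; rewrite !cardT => dy dx.
rewrite /depth_enum (set_nth_default x y dy) => /eqP.
by rewrite nth_uniq ?enum_uniq // => /eqP /(depth_complete_inj p_st).
Qed.

(* Search trees on a complete graph are paths, so [depth_enum p] is a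
   permutation of [T]; [tree_sign p] is its parity ([false] if it is not a
   permutation). *)
Definition tree_sign p : bool :=
  if [pick s : {perm T} | [forall x, s x == depth_enum p x]] is Some s
  then odd_perm s else false.

Lemma tree_signE p (s : {perm T}) : s =1 depth_enum p -> tree_sign p = odd_perm s.
Proof.
move=> sp; rewrite /tree_sign; case: pickP => [s' /forallP s'p | no_s].
  by congr odd_perm; apply/permP => x; rewrite sp; apply/eqP.
by move: (no_s s) => /forallP []; move=> x; rewrite sp.
Qed.

Lemma tree_sign_rotate p u v : search_tree e p -> search_tree e (rotate e p u v) ->
  p v = Some u -> tree_sign (rotate e p u v) = ~~ tree_sign p.
Proof.
move=> p_st q_st pv; have p_root := search_tree_reaches_root p_st.
rewrite (tree_signE (permE (depth_enum_inj p_st))).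
rewrite (@tree_signE _ (tperm u v * perm (depth_enum_inj p_st))%g).
  by rewrite odd_permM odd_tperm (parent_neq p_root pv).
move=> x; rewrite permM permE /depth_enum (depth_rotate p_st q_st pv) /=.
by apply: set_nth_default; rewrite -cardT; exact: depth_lt.
Qed.
End CompleteGraph.

Section RotationGraphColoring.
Variables (T : finType) (e : rel T).
Hypotheses (e_sym : symmetric e) (e_irr : irreflexive e).
Hypothesis e_conn : forall x y : T, connect e x y.

Lemma complete_graphP :
  reflect (complete_graph e) [forall x, forall y, (x != y) ==> e x y].
Proof.
apply: (iffP forallP) => [all_e x y | e_comp x].
  exact/implyP/(forallP (all_e x) y).
by apply/forallP => y; apply/implyP; exact: e_comp.
Qed.

Lemma noncomplete_induced_path3 : ~ complete_graph e ->
  exists a b c, [/\ a != c, e a b, e b c & ~~ e a c].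
Proof.
move/complete_graphP/forallPn => [x /forallPn [y]].
rewrite negb_imply => /andP [xy nxy].
pose A := [pred z | (z == x) || e x z].
case: (boolP [exists b, exists c, [&& b \in A, e b c & c \notin A]]) => [|no_exit].
  case/existsP => b /existsP [c /and3P [+ ebc]].
  rewrite !inE negb_or => bA /andP [cx nxc].
  have exb : e x b by case/orP: bA => [/eqP bx | //]; move: nxc; rewrite -bx ebc.
  by exists x, b, c; rewrite eq_sym.
have A_closed : closed e A.
  move=> u w euw; apply/idP/idP => uA; apply: contraR no_exit => wA; apply/existsP.
    by exists u; apply/existsP; exists w; rewrite uA euw wA.
  by exists w; apply/existsP; exists u; rewrite uA e_sym euw wA.
have := closed_connect A_closed (e_conn x y); rewrite !inE eqxx /= eq_sym.
by rewrite (negbTE xy) (negbTE nxy).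
Qed.

Lemma complete_or_rot_C5 : complete_graph e \/ rot_has_C5 e.
Proof.
case: complete_graphP => [|/noncomplete_induced_path3 [a [b [c [ac eab ebc nac]]]]].
  by left.
right.
have ab : a != b by apply: contraTneq eab => ->; rewrite e_irr.
have bc : b != c by apply: contraTneq ebc => ->; rewrite e_irr.
exact: path3_rot_C5 e_sym e_irr ab bc ac eab ebc e_conn nac.
Qed.

Lemma rot_colorable_ge2 k : (exists p q, rot_adj e p q) -> rot_colorable e k -> 1 < k.
Proof.
move=> [p [q pq]] [c [c_lt c_proper]]; rewrite ltnNge; apply/negP => k1.
have c0 r : r < k -> r = 0.
  by move=> rk; apply/eqP; rewrite -leqn0 -ltnS (leq_trans rk k1).
by apply: (c_proper p q pq); rewrite (c0 _ (c_lt p pq.1)) (c0 _ (c_lt q pq.2.1)).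
Qed.

Lemma complete_rot_chromatic2 : complete_graph e -> 3 <= #|T| ->
  rot_chromatic_number e 2.
Proof.
move=> e_comp T3; split=> [|k].
  exists (fun p => nat_of_bool (tree_sign p)).
  split=> [p _ | p q]; first by case: tree_sign.
  case=> p_st [q_st [[u [v [pv qE]]] | [u [v [qv pE]]]]]; [subst q | subst p].
    by rewrite (tree_sign_rotate e_comp p_st q_st pv); case: tree_sign.
  by rewrite (tree_sign_rotate e_comp q_st p_st qv); case: tree_sign.
apply: rot_colorable_ge2.
have [x0 _] : exists x0 : T, x0 \in T by apply/card_gt0P; apply: leq_trans T3.
pose v i := nth x0 (enum T) i.
have v_neq i j : i < 3 -> j < 3 -> i != j -> v i != v j.
  move=> i3 j3 ij; rewrite nth_uniq ?enum_uniq // -cardT.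
  - exact: leq_trans i3 T3.
  - exact: leq_trans j3 T3.
have ab := v_neq 0 1 isT isT isT; have bc := v_neq 1 2 isT isT isT.
have ac := v_neq 0 2 isT isT isT.
exact: path3_rot_adj e_sym e_irr ab bc ac (e_comp _ _ ab) (e_comp _ _ bc) e_conn.
Qed.

Lemma rot_C5_not_colorable2 : rot_has_C5 e -> ~ rot_colorable e 2.
Proof.
case=> [p0 [p1 [p2 [p3 [p4 [_ [a01 [a12 [a23 [a34 a40]]]]]]]]]] [c [c_lt2 c_proper]].
have flip p q : rot_adj e p q -> (c q == 0) = ~~ (c p == 0).
  move=> pq; move: (c_proper p q pq) (c_lt2 p pq.1) (c_lt2 q pq.2.1).
  by case: (c p) (c q) => [|[|?]] [|[|?]].
move: (flip _ _ a40); rewrite (flip _ _ a34) (flip _ _ a23) (flip _ _ a12).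
by rewrite (flip _ _ a01); case: (c p0 == 0).
Qed.

End RotationGraphColoring.

Theorem lemma3p1 (T : finType) (e : rel T)
  (e_sym : symmetric e) (e_irr : irreflexive e)
  (e_conn : forall x y : T, connect e x y)
  (hT : 3 <= #|T|) :
  (complete_graph e <-> rot_chromatic_number e 2) /\
  (rot_chromatic_number e 2 <-> ~ rot_has_C5 e).
Proof.
have chi2_noC5 : rot_chromatic_number e 2 -> ~ rot_has_C5 e.
  by move=> [col _] C5; exact: rot_C5_not_colorable2 C5 col.
have comp_chi2 : complete_graph e -> rot_chromatic_number e 2.
  by move=> e_comp; exact: complete_rot_chromatic2 e_sym e_irr e_conn e_comp hT.
have [e_comp | C5] := complete_or_rot_C5 e_sym e_irr e_conn.
  by have chi2 := comp_chi2 e_comp; split; split=> // _; exact: chi2_noC5.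
have nchi2 : ~ rot_chromatic_number e 2 by move/chi2_noC5.
by split; split=> // [/comp_chi2 | /(_ C5)].
Qed.
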